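(* Let $\lambda_{\min}>0$ and define $$t^*=\min_{k=0,1,\dots,K}\frac{1-\lambda_{\min}\,\mathbf{G}_{k,:}\mathbf{C}^{-1}\mathbf{F}\mathbf{1}}{\mathbf{G}_{k,:}\mathbf{C}^{-1}\tilde{\mathbf{h}}}.$$ If $t^*\ge 0$, then $t^*$ is the optimal value of problem (P). If $t^*<0$, then (P) is infeasible (the network cannot support per-UE arrival rate $\lambda_{\min}$).
   Context: Consider a rooted tree whose root is the donor (vertex $0$), whose other internal vertices are IAB nodes $1,\dots,K$, and whose leaves are $M$ user equipments (UEs); vertices $0,\dots,K$ are called base stations (BSs), and every BS has at least one child. Every non-root vertex $v$ has a unique parent, and the edge from its parent to $v$ is indexed by $v$; let $\mathcal{E}$ be the set of edges. For each UE $m$, $\mathsf{R}(m)$ is the set of edges on the path from $0$ to $m$, and $h_m=|\mathsf{R}(m)|$. The routing matrix $\mathbf{F}\in\{0,1\}^{|\mathcal{E}|\times M}$ has $F_{v,m}=1$ iff $v\in\mathsf{R}(m)$. Let $\mathbf{C}=\mathrm{diag}(c_v)_{v\in\mathcal{E}}$ with all $c_v>0$. Let $\mathbf{G}\in\{0,1\}^{(K+1)\times|\mathcal{E}|}$ (rows indexed by BSs $0,\dots,K$) be a scheduling matrix in which every row and every column contains at least one $1$ (e.g. the half-duplex matrix $\mathbf{G}_{\mathrm{HD}}$ with $[\mathbf{G}_{\mathrm{HD}}]_{k,v}=1$ iff BS $k$ is the parent or the child of edge $v$, or the full-duplex matrix $\mathbf{G}_{\mathrm{FD}}$ with $[\mathbf{G}_{\mathrm{FD}}]_{k,v}=1$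 iff BS $k$ is the parent of edge $v$). $\mathbf{G}_{k,:}$ denotes the row of $\mathbf{G}$ for BS $k$; $\mathbf{1}$ denotes the all-ones vector. The vector $\tilde{\mathbf{h}}\in\mathbb{R}^{|\mathcal{E}|}$ is defined by $\tilde h_v=\max\{h_m: v\in\mathsf{R}(m)\}$. Problem (P): maximize $t$ over $(t,\boldsymbol{\lambda},\boldsymbol{\mu})\in\mathbb{R}\times\mathbb{R}^M\times\mathbb{R}^{|\mathcal{E}|}$ subject to $\boldsymbol{\lambda}\ge\lambda_{\min}\mathbf{1}$, $\mathbf{0}\le\boldsymbol{\mu}\le\mathbf{1}$, $t\ge0$, $\mathbf{G}\boldsymbol{\mu}\le\mathbf{1}$ (all componentwise), and $c_v\mu_v-(\mathbf{F}\boldsymbol{\lambda})_v\ge t\,h_m$ for every UE $m$ and every edge $v\in\mathsf{R}(m)$. *)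

From HB Require Import structures.
From mathcomp Require Import all_boot all_order all_algebra.
Set Implicit Arguments. Unset Strict Implicit. Unset Printing Implicit Defensive.
Import Order.TTheory GRing.Theory Num.Theory.
Local Open Scope ring_scope.

(* Vertices: BSs 0..K (inl k, donor = inl ord0) and UEs 0..M-1 (inr m). *)
Definition vtx (K M : nat) := ('I_K.+1 + 'I_M)%type.

(* Edges are indexed by the non-root vertices. *)
Definition edge (K M : nat) := {v : vtx K M | v != inl ord0}.

(* parent map [par : vtx K M -> 'I_K.+1] (its value at the root is irrelevant);
   [up par] is the parent map on BSs, stopping at the donor. *)
Definition up (K M : nat) (par : vtx K M -> 'I_K.+1) (j : 'I_K.+1) : 'I_K.+1 :=
  if j == ord0 then ord0 else par (inl j).

(* Rooted tree: every BS reaches the donor along parents; every BS has a child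
   (UEs are leaves by construction since parents are BSs). *)
Definition is_tree (K M : nat) (par : vtx K M -> 'I_K.+1) : Prop :=
  (forall k : 'I_K.+1, exists n : nat, iter n (up par) k = ord0) /\
  (forall k : 'I_K.+1, exists v : vtx K M, v != inl ord0 /\ par v = k).

(* e \in R(m): edge e is on the path from the donor to UE m. *)
Definition inRoute (K M : nat) (par : vtx K M -> 'I_K.+1) (e : edge K M) (m : 'I_M)
  : bool :=
  match val e with
  | inl j => j \in traject (up par) (par (inr m)) K.+1
  | inr m' => m' == m
  end.

Definition hops (K M : nat) (par : vtx K M -> 'I_K.+1) (m : 'I_M) : nat :=
  #|[pred e : edge K M | inRoute par e m]|.

Definition htilde (K M : nat) (par : vtx K M -> 'I_K.+1) (e : edge K M) : nat :=
  \max_(m | inRoute par e m) hops par m.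

Definition F1 (K M : nat) (par : vtx K M -> 'I_K.+1) (e : edge K M) : nat :=
  #|[pred m : 'I_M | inRoute par e m]|.

Definition Flam (R : realFieldType) (K M : nat) (par : vtx K M -> 'I_K.+1)
  (lam : 'I_M -> R) (e : edge K M) : R :=
  \sum_(m | inRoute par e m) lam m.

Definition sched_ok (K M : nat) (G : 'I_K.+1 -> edge K M -> bool) : Prop :=
  (forall k, exists e, G k e) /\ (forall e, exists k, G k e).

Definition feasibleP (R : realFieldType) (K M : nat) (par : vtx K M -> 'I_K.+1)
  (c : edge K M -> R) (G : 'I_K.+1 -> edge K M -> bool) (lam_min : R)
  (t : R) (lam : 'I_M -> R) (mu : edge K M -> R) : Prop :=
  (forall m, lam_min <= lam m) /\
  (forall e, 0 <= mu e <= 1) /\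
  0 <= t /\
  (forall k, \sum_(e | G k e) mu e <= 1) /\
  (forall m e, inRoute par e m ->
     t * (hops par m)%:R <= c e * mu e - Flam par lam e).

Definition is_opt_valP (R : realFieldType) (K M : nat) (par : vtx K M -> 'I_K.+1)
  (c : edge K M -> R) (G : 'I_K.+1 -> edge K M -> bool) (lam_min : R) (t : R) : Prop :=
  (exists lam mu, feasibleP par c G lam_min t lam mu) /\
  (forall t' lam mu, feasibleP par c G lam_min t' lam mu -> t' <= t).

(* ratio for BS k:
   (1 - lam_min G_{k,:} C^{-1} F 1) / (G_{k,:} C^{-1} htilde) *)
Definition ratio (R : realFieldType) (K M : nat) (par : vtx K M -> 'I_K.+1)
  (c : edge K M -> R) (G : 'I_K.+1 -> edge K M -> bool) (lam_min : R) (k : 'I_K.+1) : R :=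
  (1 - lam_min * \sum_(e | G k e) (F1 par e)%:R / c e) /
  (\sum_(e | G k e) (htilde par e)%:R / c e).

Definition tstar (R : realFieldType) (K M : nat) (par : vtx K M -> 'I_K.+1)
  (c : edge K M -> R) (G : 'I_K.+1 -> edge K M -> bool) (lam_min : R) : R :=
  \big[Order.min/ratio par c G lam_min ord0]_(k < K.+1) ratio par c G lam_min k.

From Pilot Require Import Defs.
From HB Require Import structures.
From mathcomp Require Import all_boot all_order all_algebra zify.
Set Implicit Arguments. Unset Strict Implicit. Unset Printing Implicit Defensive.
Import Order.TTheory GRing.Theory Num.Theory.
Local Open Scope ring_scope.

(* The constraints of (P) act only through the load
   [lam_min * (F 1)_e + t * htilde_e] of each edge [e]: every feasible point
   has [c_e mu_e] at least this load (use the path constraint of a UE realising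
   htilde_e and bound F lam below by lam_min F 1), while the constant rates
   [lam = lam_min] with [mu_e = load / c_e] meet every path constraint.
   Summing load / c over the edges scheduled by BS k turns [G mu <= 1] into
   exactly [t <= ratio k], so the largest feasible t is the minimum t* of the
   ratios, and nothing is feasible when t* < 0. The tree enters only through
   the fact that every edge lies on the route of some UE: descending through
   children strictly increases the depth, so it must end at a UE. *)

Lemma fconnect_mem_traject {T : finType} {f : T -> T} {x y} :
  fconnect f x y -> y \in traject f x #|T|.
Proof.
rewrite fconnect_orbit /orbit => /trajectP [i lt_i ->].
apply/trajectP; exists i => //; apply: leq_trans lt_i _.
by rewrite /order max_card.
Qed.

Section Tree.

Variables (K M : nat) (par : vtx K M -> 'I_K.+1).
Hypothesis tree : is_tree par.

Let reach_root j : exists n, iter n (up par) j == ord0.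
Proof. by have [n Hn] := tree.1 j; exists n; apply/eqP. Qed.

Let depth j := ex_minn (reach_root j).

Let depth_up_lt {j} : j != ord0 -> (depth (up par j) < depth j)%N.
Proof.
move=> j_nz; rewrite /depth; case: ex_minnP => a _ min_a.
case: ex_minnP => [[|b]]; first by rewrite /= (negbTE j_nz).
by rewrite iterSr => /min_a.
Qed.

Lemma bs_above_some_ue j : exists m, fconnect (up par) (par (inr m)) j.
Proof.
pose N := (\max_i depth i)%N.
suff /(_ (N - depth j).+1 j) : forall n j, (N - depth j < n)%N ->
  exists m, fconnect (up par) (par (inr m)) j by apply.
elim=> // n IHn {}j lt_j; have [[j'|m] [v_nz par_v]] := tree.2 j.
- have j'_nz : j' != ord0 by apply: contra v_nz => /eqP ->.
  have up_j' : up par j' = j by rewrite /up (negbTE j'_nz).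
  have := depth_up_lt j'_nz; rewrite up_j' => lt_depth.
  have le_N : (depth j' <= N)%N by apply: leq_bigmax.
  have [|m Hm] := IHn j'; first lia.
  by exists m; apply: connect_trans Hm _; rewrite -up_j' fconnect1.
- by exists m; rewrite par_v connect0.
Qed.

Lemma edge_on_some_route (e : edge K M) : exists m, inRoute par e m.
Proof.
case: e => [[j|m] e_nz]; last by exists m; rewrite /inRoute /=.
have [m Hm] := bs_above_some_ue j; exists m.
by have := fconnect_mem_traject Hm; rewrite card_ord.
Qed.

Lemma htilde_attained e : exists2 m, inRoute par e m & htilde par e = hops par m.
Proof.
have [m0 Hm0] := edge_on_some_route e.
have route_nonempty : (0 < #|[pred m | inRoute par e m]|)%N.
  by apply/card_gt0P; exists m0.
by have [m Hm] := eq_bigmax_cond (hops par) route_nonempty; exists m.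
Qed.

End Tree.

Section Problem.

Variables (R : realFieldType) (K M : nat) (par : vtx K M -> 'I_K.+1)
  (c : edge K M -> R) (G : 'I_K.+1 -> edge K M -> bool) (lam_min : R).
Hypotheses (tree : is_tree par) (c_gt0 : forall e, 0 < c e) (sched : sched_ok G).

Lemma leq_hops_htilde e m : inRoute par e m -> (hops par m <= htilde par e)%N.
Proof. exact: leq_bigmax_cond. Qed.

Lemma hops_gt0 e m : inRoute par e m -> (0 < hops par m)%N.
Proof. by move=> Hm; apply/card_gt0P; exists e. Qed.

Lemma Flam_ge_F1 (lam : 'I_M -> R) e :
  (forall m, lam_min <= lam m) -> lam_min * (F1 par e)%:R <= Flam par lam e.
Proof.
by move=> ge_lam; rewrite /Flam mulr_natr -sumr_const; apply: ler_sum.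
Qed.

Lemma Flam_cst e : Flam par (fun=> lam_min) e = lam_min * (F1 par e)%:R.
Proof. by rewrite /Flam mulr_natr -sumr_const. Qed.

Definition edge_load (t : R) (e : edge K M) : R :=
  lam_min * (F1 par e)%:R + t * (htilde par e)%:R.

Lemma feasible_edge_load t lam mu e :
  feasibleP par c G lam_min t lam mu -> edge_load t e <= c e * mu e.
Proof.
case=> ge_lam [_ [_ [_ path_ok]]]; rewrite /edge_load.
have [m Hm ->] := htilde_attained tree e.
rewrite -[c e * mu e](subrK (Flam par lam e)) [X in _ <= X]addrC.
by apply: lerD; [exact: Flam_ge_F1 | exact: path_ok].
Qed.

Lemma ratio_den_gt0 k : 0 < \sum_(e | G k e) (htilde par e)%:R / c e.
Proof.
have [e Gke] := sched.1 k; rewrite (bigD1 e) //=.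
apply: ltr_wpDr; first by apply: sumr_ge0 => e' _; rewrite divr_ge0 // ltW.
have [m Hm ->] := htilde_attained tree e.
by rewrite divr_gt0 // ltr0n (hops_gt0 Hm).
Qed.

Lemma le_ratioE t k :
  (t <= Defs.ratio par c G lam_min k) = (\sum_(e | G k e) edge_load t e / c e <= 1).
Proof.
have -> : \sum_(e | G k e) edge_load t e / c e =
    lam_min * \sum_(e | G k e) (F1 par e)%:R / c e +
    t * \sum_(e | G k e) (htilde par e)%:R / c e.
  by rewrite !mulr_sumr -big_split; apply: eq_bigr => e _; rewrite mulrDl !mulrA.
by rewrite ler_pdivlMr ?ratio_den_gt0 // lerBrDl.
Qed.

Lemma feasible_le_tstar t lam mu :
  feasibleP par c G lam_min t lam mu -> t <= tstar par c G lam_min.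
Proof.
move=> feas; have row_ok := feas.2.2.2.1.
have le_ratio k : t <= Defs.ratio par c G lam_min k.
  rewrite le_ratioE; apply: le_trans (row_ok k); apply: ler_sum => e _.
  by rewrite ler_pdivrMr // mulrC (feasible_edge_load e feas).
by apply: le_bigmin.
Qed.

Lemma feasible_tstar : 0 <= lam_min -> 0 <= tstar par c G lam_min ->
  exists lam mu, feasibleP par c G lam_min (tstar par c G lam_min) lam mu.
Proof.
set ts := tstar _ _ _ _ => lam_ge0 ts_ge0.
pose mu e := edge_load ts e / c e.
have mu_ge0 e : 0 <= mu e.
  by rewrite divr_ge0 ?addr_ge0 ?mulr_ge0 // ltW.
have row_ok k : \sum_(e | G k e) mu e <= 1 by rewrite -le_ratioE bigmin_le.
exists (fun=> lam_min), mu; split=> //; split.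
  move=> e; rewrite mu_ge0 /=; have [k Gke] := sched.2 e.
  apply: le_trans (row_ok k); rewrite (bigD1 e) //= lerDl.
  by apply: sumr_ge0 => e' _.
do 2!split=> //.
move=> m e Hm; rewrite Flam_cst /mu [c e * _]mulrC divfK ?gt_eqF //.
rewrite /edge_load addrAC subrr add0r.
by rewrite ler_wpM2l // ler_nat leq_hops_htilde.
Qed.

End Problem.

Theorem theorem1 (R : realFieldType) (K M : nat)
  (par : vtx K M -> 'I_K.+1) (c : edge K M -> R)
  (G : 'I_K.+1 -> edge K M -> bool) (lam_min : R) :
  is_tree par ->
  (forall e, 0 < c e) ->
  sched_ok G ->
  0 < lam_min ->
  (0 <= tstar par c G lam_min -> is_opt_valP par c G lam_min (tstar par c G lam_min)) /\
  (tstar par c G lam_min < 0 ->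
     ~ exists t lam mu, feasibleP par c G lam_min t lam mu).
Proof.
move=> tree c_gt0 sched lam_gt0; split.
- move=> ts_ge0; split; first exact: feasible_tstar (ltW lam_gt0) ts_ge0.
  by move=> t lam mu; apply: feasible_le_tstar.
- move=> ts_lt0 [t [lam [mu feas]]].
  have t_ge0 : 0 <= t by case: feas => _ [_ []].
  have := feasible_le_tstar tree c_gt0 sched feas.
  by rewrite leNgt (lt_le_trans ts_lt0 t_ge0).
Qed.
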